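(* Let $\overrightarrow{W}$ be a Morse sequence on a simplicial complex $K$. (1) If $z\in Z_p(K)$, then $\widetilde{\curlywedge}_p(\curlywedge_p(z))$ is homologous to $z$, i.e. $\widetilde{\curlywedge}_p(\curlywedge_p(z))+z\in B_p(K)$. (2) If $z\in Z^p(K)$, then $\widetilde{\curlyvee}_p(\curlyvee_p(z))$ is cohomologous to $z$, i.e. $\widetilde{\curlyvee}_p(\curlyvee_p(z))+z\in B^p(K)$.
   Context: A simplicial complex $K$ is a finite collection of non-empty finite sets closed under taking non-empty subsets; $\dim\sigma=|\sigma|-1$, $K^{(p)}$ the set of $p$-simplices. A pair $(\sigma,\tau)$ with $\sigma\subsetneq\tau$ is a free pair for $K$ if $\tau$ is the only simplex other than $\sigma$ containing $\sigma$; $K$ is then an elementary expansion of $K\setminus\{\sigma,\tau\}$. If $\nu$ is a facet (maximal simplex) of $K$, $K$ is an elementary filling of $K\setminus\{\nu\}$. A Morse sequence on $K$ is a sequence $\langle\emptyset=K_0,\dots,K_k=K\rangle$ with each $K_i$ an elementary expansion or filling of $K_{i-1}$; simplices added by fillings are critical; for an expansion $K_i=K_{i-1}\cup\{\sigma,\tau\}$, $\sigma\subset\tau$, $\sigma$ is lower regular and $\tau$ upper regular. $\widehat W$ is the set of critical simplices. $K[p]$ is the $\mathbb{Z}_2$-vector space of subsets of $K^{(p)}$ (sum = symmetric difference, $0=\emptyset$), $\widehat W[p]=\{c\in K[p]:c\subseteq\widehat W\}$. For $\sigma\in K^{(p)}$, $\partial(\sigma)=\{\tau\in K^{(p-1)}:\tau\subset\sigma\}$,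 $\delta(\sigma)=\{\tau\in K^{(p+1)}:\sigma\subset\tau\}$, extended linearly to $\partial_p,\delta_p$; $Z_p(K)=\ker\partial_p$, $B_p(K)=\operatorname{im}\partial_{p+1}$, $Z^p(K)=\ker\delta_p$, $B^p(K)=\operatorname{im}\delta_{p-1}$. The reference map $\curlywedge$ is the unique map assigning to each $p$-simplex an element of $\widehat W[p]$, with linear extension $\curlywedge_p:K[p]\to\widehat W[p]$, such that $\curlywedge(\nu)=\{\nu\}$ for critical $\nu$ and $\curlywedge(\tau)=0=\curlywedge(\partial(\tau))$ for upper regular $\tau$; the coreference map $\curlyvee$ (linear extension $\curlyvee_p$) is the unique such map with $\curlyvee(\nu)=\{\nu\}$ for critical $\nu$ and $\curlyvee(\sigma)=0=\curlyvee(\delta(\sigma))$ for lower regular $\sigma$. The extension map $\widetilde\curlywedge_p:\widehat W[p]\to K[p]$ and coextension map $\widetilde\curlyvee_p:\widehat W[p]\to K[p]$ are the linear maps defined on critical $p$-simplices $\kappa$ by $\widetilde\curlywedge(\kappa)=\{\nu\in K:\kappa\in\curlyvee(\nu)\}$ and $\widetilde\curlyvee(\kappa)=\{\nu\in K:\kappa\in\curlywedge(\nu)\}$. *)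

(* Simplicial complexes over a finite vertex type V;
   simplices are finite sets {set V}; chains over Z_2 are sets of simplices. *)
From mathcomp Require Import all_boot.
Set Implicit Arguments. Unset Strict Implicit. Unset Printing Implicit Defensive.

Section Defs.
Variable V : finType.
Notation simplex := {set V}.
Notation chain := {set {set V}}.

Definition is_complex (K : chain) : bool :=
  (set0 \notin K) &&
  [forall s in K, forall t : simplex, ((t != set0) && (t \subset s)) ==> (t \in K)].

(* simplices of K with n vertices; K^(p) is Ksz K p.+1 (dim = card - 1) *)
Definition Ksz (K : chain) (n : nat) : chain := [set s in K | #|s| == n].
Definition Kp (K : chain) (p : nat) : chain := Ksz K p.+1.

(* Z_2 sum of chains: symmetric difference *)
Definition csum (a b : chain) : chain := (a :\: b) :|: (b :\: a).

(* linear extension over Z_2 of a map on simplices *)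
Definition lin (f : simplex -> chain) (c : chain) : chain :=
  [set x | odd #|[set s in c | x \in f s]|].

Definition bd (K : chain) (s : simplex) : chain :=
  [set t in K | (t \proper s) && (#|t|.+1 == #|s|)].
Definition cobd (K : chain) (s : simplex) : chain :=
  [set t in K | (s \proper t) && (#|t| == #|s|.+1)].

Definition is_cycle (K : chain) (p : nat) (z : chain) : Prop :=
  z \subset Kp K p /\ lin (bd K) z = set0.
Definition is_boundary (K : chain) (p : nat) (x : chain) : Prop :=
  exists2 c : chain, c \subset Kp K p.+1 & lin (bd K) c = x.
Definition is_cocycle (K : chain) (p : nat) (z : chain) : Prop :=
  z \subset Kp K p /\ lin (cobd K) z = set0.
(* B^p = im delta_{p-1}, with K^(p-1) = simplices with p vertices
   (empty when p = 0, since K has no empty simplex) *)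
Definition is_coboundary (K : chain) (p : nat) (x : chain) : Prop :=
  exists2 c : chain, c \subset Ksz K p & lin (cobd K) c = x.

(* Steps of a Morse sequence: inl nu = elementary filling adding facet nu,
   inr (sigma, tau) = elementary expansion adding the free pair (sigma, tau). *)
Definition step := (simplex + (simplex * simplex))%type.

Fixpoint valid_from (K0 : chain) (W : seq step) : bool :=
  match W with
  | [::] => true
  | inl nu :: W' =>
      let K1 := nu |: K0 in
      [&& nu \notin K0, is_complex K1,
          [forall t in K1, (nu \subset t) ==> (t == nu)]
        & valid_from K1 W']
  | inr (sg, tu) :: W' =>
      let K1 := sg |: (tu |: K0) in
      [&& sg \proper tu, sg \notin K0, tu \notin K0, is_complex K1,
          [forall t in K1, (sg \subset t) ==> ((t == sg) || (t == tu))]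
            (* (sg, tu) is a free pair for K1 *)
        & valid_from K1 W']
  end.

Definition step_added (x : step) : chain :=
  match x with inl nu => [set nu] | inr (sg, tu) => [set sg; tu] end.

Definition morse_seq (K : chain) (W : seq step) : Prop :=
  valid_from set0 W /\ \bigcup_(x <- W) step_added x = K.

Definition crit (W : seq step) : chain := [set nu | inl nu \in W].
Definition lowreg (W : seq step) : chain :=
  [set sg | [exists tu : simplex, inr (sg, tu) \in W]].
Definition upreg (W : seq step) : chain :=
  [set tu | [exists sg : simplex, inr (sg, tu) \in W]].

Definition is_ref (K : chain) (W : seq step) (r : simplex -> chain) : Prop :=
  [/\ (forall s, s \in K -> r s \subset [set k in crit W | #|k| == #|s|]),
      (forall nu, nu \in crit W -> r nu = [set nu]) &
      (forall tu, tu \in upreg W -> r tu = set0 /\ lin r (bd K tu) = set0)].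

Definition is_coref (K : chain) (W : seq step) (r : simplex -> chain) : Prop :=
  [/\ (forall s, s \in K -> r s \subset [set k in crit W | #|k| == #|s|]),
      (forall nu, nu \in crit W -> r nu = [set nu]) &
      (forall sg, sg \in lowreg W -> r sg = set0 /\ lin r (cobd K sg) = set0)].

Definition ext (K : chain) (coref : simplex -> chain) (c : chain) : chain :=
  lin (fun k => [set nu in K | k \in coref nu]) c.
Definition coext (K : chain) (ref : simplex -> chain) (c : chain) : chain :=
  lin (fun k => [set nu in K | k \in ref nu]) c.

End Defs.

From mathcomp Require Import all_boot zify.
Set Implicit Arguments. Unset Strict Implicit. Unset Printing Implicit Defensive.

(* Write [r] for the reference map and [e] for the extension map.  Every chain
   [c] of simplices of one dimension satisfies [c + r c = u + bd w] with [u] and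
   [w] upper-regular: induct on the stage at which a simplex enters the Morse
   sequence, trading a lower-regular simplex for the boundary of its partner
   plus the other faces of that partner, which all entered earlier.  For a cycle
   [z], [e (r z)] agrees with [r z] on critical simplices, vanishes on
   lower-regular ones, and its boundary avoids lower-regular simplices because
   the coreference map kills their coboundaries.  So [e (r z) + r z + u] is an
   upper-regular chain whose boundary [bd (e (r z) + z)] avoids lower-regular
   simplices; its last upper-regular simplex would contribute its partner, hence
   it is [0] and [e (r z) + z = bd w].  Cohomology is the same argument for the
   coboundary, the coreference map and the reversed sequence. *)

Section Z2Chains.
Variable V : finType.
Local Notation T := {set V}.
Implicit Types (a b c : {set T}) (f g : T -> {set T}).

Lemma mem_lin f c x : (x \in lin f c) = \big[addb/false]_(s in c) (x \in f s).
Proof.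
rewrite inE -sum1_card big_mkcond [RHS]big_mkcond /=.
apply: (big_rec2 (fun n (e : bool) => odd n = e)) => // s n e _ <-.
by rewrite !inE oddD; case: (s \in c); case: (x \in f s).
Qed.

Lemma in_csum a b x : (x \in csum a b) = (x \in a) (+) (x \in b).
Proof. by rewrite !inE; case: (x \in a); case: (x \in b). Qed.

Lemma lin_bigE f c : lin f c = \big[@csum V/set0]_(s in c) f s.
Proof.
apply/setP => x; rewrite mem_lin.
by rewrite (big_morph (fun S : {set T} => x \in S) (fun a b => in_csum a b x) (in_set0 x)).
Qed.

Lemma lin_set1 c : lin (fun s => [set s]) c = c.
Proof.
apply/setP => x; rewrite mem_lin big_mkcond (bigD1 x) //= in_set1 eqxx.
rewrite big1 ?addbF; first by case: (x \in c).
by move=> s /negbTE xs; rewrite in_set1 eq_sym xs if_same.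
Qed.

Lemma csum0r a : csum a set0 = a.
Proof. by apply/setP => x; rewrite in_csum inE addbF. Qed.

Lemma csum0l a : csum set0 a = a.
Proof. by apply/setP => x; rewrite in_csum inE. Qed.

Lemma csumC a b : csum a b = csum b a.
Proof. by apply/setP => x; rewrite !in_csum addbC. Qed.

Lemma csumA a b c : csum a (csum b c) = csum (csum a b) c.
Proof. by apply/setP => x; rewrite !in_csum addbA. Qed.

Lemma csumACA a b c d : csum (csum a b) (csum c d) = csum (csum a c) (csum b d).
Proof. by apply/setP => x; rewrite !in_csum addbACA. Qed.

Lemma csumKK a : csum a a = set0.
Proof. by apply/setP => x; rewrite in_csum addbb inE. Qed.

Lemma csum_sub a b (L : {set T}) : a \subset L -> b \subset L -> csum a b \subset L.
Proof.
move=> aL bL; apply/subsetP => x; rewrite in_csum.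
by case: (boolP (x \in a)) => [/(subsetP aL)|_ /(subsetP bL)].
Qed.

Lemma lin0 f : lin f set0 = set0.
Proof. by rewrite lin_bigE big_set0. Qed.

Lemma lin1 f s : lin f [set s] = f s.
Proof. by apply/setP => x; rewrite mem_lin big_set1. Qed.

Lemma lin_csum f a b : lin f (csum a b) = csum (lin f a) (lin f b).
Proof.
apply/setP => x; rewrite in_csum !mem_lin big_mkcond.
rewrite [X in X (+) _]big_mkcond [X in _ (+) X]big_mkcond -big_split /=.
by apply: eq_bigr => s _; rewrite in_csum; case: (s \in a); case: (s \in b); case: (x \in f s).
Qed.

Lemma lin_eq0 f c : {in c, forall s, f s = set0} -> lin f c = set0.
Proof.
move=> f0; apply/setP => x; rewrite mem_lin inE big1 // => s /f0 ->.
by rewrite inE.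
Qed.

Lemma lin_lin f g c : lin g (lin f c) = lin (fun s => lin g (f s)) c.
Proof.
apply/setP => x; rewrite !mem_lin big_mkcond.
under eq_bigr => m _ do
  rewrite -[if _ then _ else _]/((m \in lin f c) && _) mem_lin big_distrl.
rewrite exchange_big /=; apply: eq_bigr => s _.
by rewrite mem_lin [RHS]big_mkcond.
Qed.

Lemma lin_sub f c (L : {set T}) : {in c, forall s, f s \subset L} -> lin f c \subset L.
Proof.
move=> fL; rewrite lin_bigE; apply: (big_ind (fun a => a \subset L)) => //.
  exact: sub0set.
by move=> a b; apply: csum_sub.
Qed.

End Z2Chains.

Section BoundaryOfBoundary.
Variable V : finType.
Local Notation T := {set V}.
Implicit Types (K : {set T}) (a b s t : T).

Lemma complex_closed K s t :
  is_complex K -> s \in K -> t != set0 -> t \subset s -> t \in K.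
Proof.
by case/andP=> _ /forall_inP cK sK t0 ts; have /forallP/(_ t) := cK s sK; rewrite t0 ts.
Qed.

Lemma complex_neq0 K s : is_complex K -> s \in K -> s != set0.
Proof. by case/andP=> K0 _; apply: contraTneq => ->. Qed.

Lemma mem_cobd K s t : s \in K -> (t \in cobd K s) = (t \in K) && (s \in bd K t).
Proof. by move=> sK; rewrite !inE sK eq_sym andbA. Qed.

Lemma mem_bd K s t : s \in K -> (t \in bd K s) = (t \in K) && (s \in cobd K t).
Proof. by move=> sK; rewrite !inE sK eq_sym andbA. Qed.

Lemma card_interval2 a b : a \subset b -> #|b| = #|a|.+2 ->
  #|[set m : T | [&& a \subset m, m \subset b & #|m| == #|a|.+1]]| = 2.
Proof.
move=> ab ba2; have ->: [set m : T | [&& a \subset m, m \subset b & #|m| == #|a|.+1]]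
    = [set v |: a | v in b :\: a].
  apply/setP => m; rewrite inE; apply/and3P/imsetP => [[am mb /eqP ma] | [v]].
    have /cards1P[v mDa] : #|m :\: a| == 1 by rewrite cardsD (setIidPr am) ma subSnn.
    have /setDP[vm va] : v \in m :\: a by rewrite mDa set11.
    exists v; first by rewrite inE va (subsetP mb).
    by rewrite -(setID m a) (setIidPr am) mDa setUC.
  rewrite inE => /andP[va vb] ->; split; first exact: subsetUr.
    by rewrite subUset sub1set vb ab.
  by rewrite cardsU1 va.
rewrite card_in_imset; first by rewrite cardsD (setIidPr ab) ba2; lia.
move=> v w /setDP[_ va] _ vwa; apply/set1P.
by move: (setU11 v a); rewrite vwa !inE (negbTE va) orbF.
Qed.

Lemma card_bd K t x : x \in bd K t -> #|x| = #|t|.-1.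
Proof. by rewrite inE => /and3P[_ _ /eqP <-]. Qed.

Lemma card_cobd K t x : x \in cobd K t -> #|x| = #|t|.+1.
Proof. by rewrite inE => /and3P[_ _ /eqP]. Qed.

Lemma bd_sub K s : bd K s \subset K.
Proof. by apply/subsetP => t; rewrite inE => /andP[]. Qed.

Lemma cobd_sub K s : cobd K s \subset K.
Proof. by apply/subsetP => t; rewrite inE => /andP[]. Qed.

Definition bd_interval K a b := [set m in K | (a \in bd K m) && (m \in bd K b)].

Lemma card_bd_interval_even K a b :
  is_complex K -> b \in K -> ~~ odd #|bd_interval K a b|.
Proof.
move=> cK bK; have [/and3P[aK ab /eqP ba2] | nab] :=
  boolP [&& a \in K, a \subset b & #|b| == #|a|.+2].
  suff ->: bd_interval K a b = [set m : T | [&& a \subset m, m \subset b & #|m| == #|a|.+1]].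
    by rewrite card_interval2.
  apply/setP => m; rewrite !inE aK !properEcard /=.
  apply/and5P/and3P => [[_ /andP[/andP[am _] /eqP ma] _ /andP[mb _] _] | [am mb /eqP ma]].
    by rewrite am mb ma.
  have mK : m \in K by apply: complex_closed cK bK _ mb; rewrite -card_gt0 ma.
  by split; rewrite ?mK ?am ?mb ?ma ?ba2 ?ltnSn ?eqxx.
suff ->: bd_interval K a b = set0 by rewrite cards0.
apply/setP => m; rewrite !inE !properEcard; apply: contraNF nab.
case/and3P=> _ /and3P[aK /andP[am _] /eqP am1] /and3P[_ /andP[mb _] /eqP mb1].
by rewrite aK (subset_trans am mb) -mb1 -am1 eqxx.
Qed.

Lemma bd_bd K : is_complex K -> {in K, forall s, lin (bd K) (bd K s) = set0}.
Proof.
move=> cK s sK; apply/setP => x; rewrite !inE; apply: negbTE.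
suff ->: [set m in bd K s | x \in bd K m] = bd_interval K x s.
  exact: card_bd_interval_even.
apply/setP => m; rewrite [LHS]inE [RHS]inE andbC.
by case msK: (m \in bd K s); rewrite ?andbF //= (subsetP (bd_sub K s) m msK).
Qed.

Lemma cobd_cobd K : is_complex K -> {in K, forall s, lin (cobd K) (cobd K s) = set0}.
Proof.
move=> cK s sK; apply/setP => x; rewrite !inE; apply: negbTE.
have [xK | xK] := boolP (x \in K); last first.
  rewrite (_ : [set m in cobd K s | x \in cobd K m] = set0) ?cards0 //.
  by apply/setP => m; rewrite !inE (negbTE xK) andbF.
suff ->: [set m in cobd K s | x \in cobd K m] = bd_interval K s x.
  exact: card_bd_interval_even.
apply/setP => m; rewrite inE [in RHS]inE mem_cobd //.
by case mK: (m \in K); rewrite //= (mem_cobd _ mK) xK.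
Qed.

End BoundaryOfBoundary.

(* An abstract acyclic matching: [C], [L], [P] stand for the critical, upper-
   and lower-regular simplices, [D] for the boundary, [r] and [q] for the
   reference and coreference maps, [pi] and [mu] for the pairing and [rho] for
   the stage.  Reading [D] as the coboundary, swapping [L] and [P] and reversing
   [rho] gives the dual instance. *)
Section MorseReduction.
Variable V : finType.
Local Notation T := {set V}.
Variables (K C L P : {set T}) (D r : T -> {set T}) (g : nat -> nat).
Variables (rho : T -> nat) (pi : T -> T).
Implicit Types (a b c u w z : {set T}) (f : T -> {set T}).

Hypothesis cover : forall s, s \in K -> [\/ s \in C, s \in L | s \in P].
Hypothesis r_crit : forall k, k \in C -> r k = [set k].
Hypothesis r_L : forall l, l \in L -> r l = set0 /\ lin r (D l) = set0.
Hypothesis D_sub : forall t, D t \subset K.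
Hypothesis D_grade : forall t x, x \in D t -> #|x| = g #|t|.
Hypothesis pi_P : forall s, s \in P ->
  [/\ pi s \in L, s \in D (pi s) & forall x, x \in D (pi s) -> x != s -> rho x < rho s].

Definition ref_splits n (c : {set T}) := exists u w : {set T}, [/\ u \subset L,
  w \subset [set t in L | g #|t| == n] & csum c (lin r c) = csum u (lin D w)].

Lemma ref_splits0 n : ref_splits n set0.
Proof. by exists set0, set0; rewrite !sub0set !lin0 csum0r. Qed.

Lemma ref_splits_csum n a b :
  ref_splits n a -> ref_splits n b -> ref_splits n (csum a b).
Proof.
move=> [ua [wa [uaL waL ea]]] [ub [wb [ubL wbL eb]]].
exists (csum ua ub), (csum wa wb); split; try exact: csum_sub.
by rewrite !lin_csum csumACA ea eb csumACA.
Qed.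

Lemma ref_splits_lin n f c :
  {in c, forall s, ref_splits n (f s)} -> ref_splits n (lin f c).
Proof.
move=> fc; rewrite lin_bigE; apply: big_ind => //; first exact: ref_splits0.
exact: ref_splits_csum.
Qed.

Lemma ref_splits_set1 N s : rho s < N -> s \in K -> ref_splits #|s| [set s].
Proof.
elim: N s => [//|N IH] s sN sK; case: (cover sK) => [sC | sL | sP].
- by exists set0, set0; rewrite lin1 r_crit // csumKK lin0 csum0r !sub0set.
- by exists [set s], set0; rewrite lin1 (proj1 (r_L sL)) lin0 !csum0r sub1set sL sub0set.
have [tL sDt faces_below] := pi_P sP; set t := pi s in tL sDt faces_below.
have splits_Dt : ref_splits #|s| (D t).
  exists set0, [set t]; rewrite (proj2 (r_L tL)) lin1 csum0r csum0l sub0set.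
  by rewrite sub1set inE tL (D_grade sDt) eqxx.
have splits_rest : ref_splits #|s| (csum (D t) [set s]).
  rewrite -[csum _ _]lin_set1; apply: ref_splits_lin => x; rewrite in_csum in_set1.
  have [-> | xs] := eqVneq x s; first by rewrite sDt.
  rewrite addbF => xDt; rewrite (D_grade sDt) -(D_grade xDt).
  apply: IH; last exact: subsetP (D_sub t) x xDt.
  exact: leq_trans (faces_below x xDt xs) sN.
by rewrite -[[set s]]csum0l -(csumKK (D t)) -csumA; apply: ref_splits_csum.
Qed.

Lemma ref_splits_graded n c : c \subset [set s in K | #|s| == n] -> ref_splits n c.
Proof.
move=> cKn; rewrite -[c]lin_set1; apply: ref_splits_lin => s /(subsetP cKn).
by rewrite inE => /andP[sK /eqP <-]; apply: (@ref_splits_set1 (rho s).+1).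
Qed.

Variable mu : T -> T.
Hypothesis mu_L : forall l, l \in L -> [/\ mu l \in P, mu l \in D l &
  forall l', l' \in L -> l' != l -> mu l \in D l' -> rho l < rho l'].

Lemma matched_chain_eq0 u : u \subset L -> [disjoint lin D u & P] -> u = set0.
Proof.
move=> uL uDP; case: (set_0Vmem u) => [// | [l0 l0u]].
have [l lu l_max] := @arg_maxnP _ l0 (mem u) rho l0u.
have [mlP mlDl ml_only] := mu_L (subsetP uL l lu).
suff mlDu : mu l \in lin D u by move/disjointFr: uDP => /(_ _ mlDu); rewrite mlP.
rewrite mem_lin (bigD1 l) //= mlDl big1 // => l' /andP[l'u l'l].
apply: contraTF (l_max l' l'u) => /(ml_only l' (subsetP uL l' l'u) l'l).
by rewrite /= -ltnNge.
Qed.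

Variables (q Dt : T -> {set T}).
Hypothesis C_sub : C \subset K.
Hypothesis q_crit : forall k, k \in C -> q k = [set k].
Hypothesis q_P : forall s, s \in P -> q s = set0 /\ lin q (Dt s) = set0.
Hypothesis Dt_D : forall s t, s \in P -> (t \in Dt s) = (t \in K) && (s \in D t).

Lemma ext_sub a : ext K q a \subset K.
Proof. by apply: lin_sub => k _; apply/subsetP => t; rewrite inE => /andP[]. Qed.

Lemma mem_ext_crit a x : x \in C -> (x \in ext K q a) = (x \in a).
Proof.
move=> xC; rewrite mem_lin big_mkcond (bigD1 x) //= big1 => [|k /negbTE kx].
  by rewrite inE (subsetP C_sub x xC) q_crit // set11 addbF; case: (x \in a).
by rewrite inE q_crit // in_set1 kx andbF if_same.
Qed.

Lemma ext_csum_sub a : a \subset C -> csum (ext K q a) a \subset L.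
Proof.
move=> aC; apply/subsetP => x; rewrite in_csum.
have [xa | xa] := boolP (x \in a); first by rewrite mem_ext_crit ?xa ?(subsetP aC).
rewrite addbF => xe; have xK := subsetP (ext_sub a) x xe.
case: (cover xK) => [xC | // | xP]; first by rewrite mem_ext_crit ?(negbTE xa) in xe.
by move: xe; rewrite mem_lin big1 // => k _; rewrite inE (proj1 (q_P xP)) inE andbF.
Qed.

Lemma bd_ext_disjoint a : [disjoint lin D (ext K q a) & P].
Proof.
apply/pred0P => s /=; apply/andP => -[sDe sP]; move: sDe.
rewrite lin_lin mem_lin big1 // => k _.
transitivity (k \in lin q (Dt s)); last by rewrite (proj2 (q_P sP)) inE.
rewrite !mem_lin big_mkcond [RHS]big_mkcond; apply: eq_bigr => t _.
by rewrite Dt_D // inE; case: (t \in K); case: (k \in q t); case: (s \in D t).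
Qed.

Hypothesis L_sub : L \subset K.
Hypothesis r_sub : forall s, s \in K -> r s \subset C.
Hypothesis D_D : forall s, s \in K -> lin D (D s) = set0.

Lemma ext_ref_homologous n z :
    z \subset [set s in K | #|s| == n] -> lin D z = set0 ->
  exists2 w : {set T}, w \subset [set t in L | g #|t| == n] &
    lin D w = csum (ext K q (lin r z)) z.
Proof.
move=> zKn z_cycle; set a := lin r z; set e := ext K q a.
have [u [w [uL wLn z_split]]] := ref_splits_graded zKn.
have aC : a \subset C.
  by apply: lin_sub => s /(subsetP zKn); rewrite inE => /andP[/r_sub].
have wL : w \subset L by apply: subset_trans wLn _; rewrite setIdE subsetIl.
have e_split : csum e z = csum (csum (csum e a) u) (lin D w).
  by rewrite -csumA -z_split [csum z _]csumC csumA -(csumA e) csumKK csum0r.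
have DDw : lin D (lin D w) = set0.
  by rewrite lin_lin lin_eq0 // => s /(subsetP wL)/(subsetP L_sub); exact: D_D.
suff u'_eq0 : csum (csum e a) u = set0 by exists w; rewrite // e_split u'_eq0 csum0l.
apply: matched_chain_eq0; first by apply: csum_sub (ext_csum_sub aC) uL.
have /(congr1 (lin D)) := e_split.
rewrite !lin_csum z_cycle DDw !csum0r => <-.
exact: bd_ext_disjoint.
Qed.

End MorseReduction.

Section MorseSequence.
Variable V : finType.
Local Notation T := {set V}.
Local Notation x0 := (inl set0 : step V).
Implicit Types (W : seq (step V)).

Definition added W : {set T} := \bigcup_(x <- W) step_added x.

Definition valid_step (K0 : {set T}) (x : step V) : bool :=
  match x with
  | inl nu =>
      [&& nu \notin K0, is_complex (nu |: K0) &
          [forall t in nu |: K0, (nu \subset t) ==> (t == nu)]]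
  | inr (sg, tu) =>
      let K1 := sg |: (tu |: K0) in
      [&& sg \proper tu, sg \notin K0, tu \notin K0, is_complex K1 &
          [forall t in K1, (sg \subset t) ==> ((t == sg) || (t == tu))]]
  end.

Lemma valid_from_cons (K0 : {set T}) x W :
  valid_from K0 (x :: W) = valid_step K0 x && valid_from (step_added x :|: K0) W.
Proof. by case: x => [nu | [sg tu]] /=; rewrite -?setUA -!andbA. Qed.

Lemma valid_step_complex (K0 : {set T}) x :
  valid_step K0 x -> is_complex (step_added x :|: K0).
Proof. by case: x => [nu | [sg tu]] /= => [/and3P[] | /and5P[_ _ _]]; rewrite -?setUA. Qed.

Lemma valid_from_complex (K0 : {set T}) W :
  valid_from K0 W -> is_complex K0 -> is_complex (added W :|: K0).
Proof.
elim: W K0 => [|x W IH] K0; first by rewrite /added big_nil set0U.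
rewrite valid_from_cons => /andP[vx vW] _.
by rewrite /added big_cons setUAC setUC; apply: IH vW (valid_step_complex vx).
Qed.

Lemma valid_from_nth (K0 : {set T}) W i : valid_from K0 W -> i < size W ->
  valid_step (added (take i W) :|: K0) (nth x0 W i).
Proof.
elim: W K0 i => [//|x W IH] K0 [|i]; rewrite valid_from_cons => /andP[vx vW].
  by rewrite /added big_nil set0U.
by move=> /(IH _ _ vW); rewrite /= /added big_cons setUAC setUC.
Qed.

Lemma mem_added W s : (s \in added W) = has (fun x => s \in step_added x) W.
Proof. by elim: W => [|x W IH]; rewrite /added ?big_nil ?big_cons ?inE //= -IH. Qed.

Variables (K : {set T}) (W : seq (step V)).
Hypothesis HW : morse_seq K W.

Lemma morse_complex : is_complex K.
Proof.
case: HW => vW <-; rewrite -[X in is_complex X]setU0; apply: valid_from_complex vW _.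
by apply/andP; split; [rewrite inE | apply/forall_inP => s; rewrite inE].
Qed.

Definition stage s := find (fun x => s \in step_added x) W.

Lemma mem_morse s : (s \in K) = has (fun x => s \in step_added x) W.
Proof. by case: HW => _ <-; rewrite -mem_added. Qed.

Lemma stage_lt s : s \in K -> stage s < size W.
Proof. by rewrite mem_morse has_find. Qed.

Lemma mem_step_stage s : s \in K -> s \in step_added (nth x0 W (stage s)).
Proof. by rewrite mem_morse => /(nth_find x0). Qed.

Lemma mem_added_take i s : s \in K -> (s \in added (take i W)) = (stage s < i).
Proof. by rewrite mem_morse mem_added => /has_take. Qed.

Lemma step_added_sub x : x \in W -> step_added x \subset K.
Proof. by move=> xW; apply/subsetP => s sx; rewrite mem_morse; apply/hasP; exists x. Qed.

Section FreePair.
Variables sg tu : T.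
Hypothesis pairW : inr (sg, tu) \in W.
Local Notation i := (index (inr (sg, tu)) W).
Local Notation K1 := (sg |: (tu |: added (take i W))).

Let pair_valid : valid_step (added (take i W)) (inr (sg, tu)).
Proof.
have iW : i < size W by rewrite index_mem.
by have := valid_from_nth (proj1 HW) iW; rewrite nth_index // setU0.
Qed.

Let free_pair t : t \in K1 -> sg \subset t -> (t == sg) || (t == tu).
Proof. by case/and5P: pair_valid => _ _ _ _ /forall_inP free /free/implyP. Qed.

Let K1_complex : is_complex K1.
Proof. by case/and5P: pair_valid. Qed.

Lemma pair_proper : sg \proper tu.
Proof. by case/and5P: pair_valid. Qed.

Lemma pair_mem : sg \in K /\ tu \in K.
Proof. by have /subsetP sK := step_added_sub pairW; rewrite !sK ?set21 ?set22. Qed.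

Let stage_pair s : s \in [set sg; tu] -> stage s = i.
Proof.
move=> s_pair; have sK := subsetP (step_added_sub pairW) s s_pair.
apply/eqP; rewrite eqn_leq [stage s <= i]leqNgt [i <= stage s]leqNgt -mem_added_take //.
apply/andP; split.
  by apply/negP => /(before_find x0); rewrite nth_index // s_pair.
case/and5P: pair_valid => _ sgK0 tuK0 _ _.
by case/set2P: s_pair => ->.
Qed.

Lemma pair_card : #|tu| = #|sg|.+1.
Proof.
have [v vtu vsg] : exists2 v, v \in tu & v \notin sg.
  by case/properP: pair_proper.
have vsgK1 : v |: sg \in K1.
  apply: (complex_closed (s := tu) K1_complex); first by rewrite !in_setU1 eqxx orbT.
    by apply/set0Pn; exists v; rewrite setU11.
  by rewrite subUset sub1set vtu proper_sub ?pair_proper.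
case/orP: (free_pair vsgK1 (subsetUr _ _)) => /eqP vsg_eq.
  by move: vsg; rewrite -vsg_eq setU11.
by rewrite -vsg_eq cardsU1 vsg.
Qed.

Lemma pair_face_stage x : x \in K -> x \proper tu -> x != sg -> stage x < stage sg.
Proof.
move=> xK xtu xsg; rewrite (stage_pair (set21 sg tu)) -mem_added_take //.
have xK1 : x \in K1.
  apply: (complex_closed (s := tu) K1_complex) (proper_sub xtu).
    by rewrite !in_setU1 eqxx orbT.
  exact: complex_neq0 morse_complex xK.
by move: xK1; rewrite !in_setU1 (negbTE xsg) (negbTE (proper_neq xtu)).
Qed.

Lemma pair_coface_stage nu :
  nu \in K -> sg \proper nu -> nu != tu -> stage tu < stage nu.
Proof.
move=> nuK sgnu nutu; rewrite (stage_pair (set22 sg tu)) ltnNge leq_eqVlt.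
apply/negP => /orP[/eqP nu_i | nu_lt].
  move: (mem_step_stage nuK); rewrite nu_i nth_index // => /set2P[] nu_eq.
    by move: sgnu; rewrite nu_eq properxx.
  by move/eqP: nutu.
have nuK1 : nu \in K1 by rewrite !in_setU1 mem_added_take // nu_lt !orbT.
case/orP: (free_pair nuK1 (proper_sub sgnu)) => /eqP nu_eq.
  by move: sgnu; rewrite nu_eq properxx.
by move/eqP: nutu.
Qed.

End FreePair.

End MorseSequence.

Section MorseMatching.
Variable V : finType.
Local Notation T := {set V}.
Variables (K : {set T}) (W : seq (step V)).
Hypothesis HW : morse_seq K W.

Definition upper_partner s := odflt s [pick t | inr (s, t) \in W].
Definition lower_partner t := odflt t [pick s | inr (s, t) \in W].

Lemma upper_partnerP s : s \in lowreg W -> inr (s, upper_partner s) \in W.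
Proof.
by rewrite inE /upper_partner => /existsP[t stW]; case: pickP => // /(_ t); rewrite stW.
Qed.

Lemma lower_partnerP t : t \in upreg W -> inr (lower_partner t, t) \in W.
Proof.
by rewrite inE /lower_partner => /existsP[s stW]; case: pickP => // /(_ s); rewrite stW.
Qed.

Lemma pair_bd sg tu : inr (sg, tu) \in W -> sg \in bd K tu.
Proof.
move=> pairW; have [sgK _] := pair_mem HW pairW.
by rewrite inE sgK (pair_proper HW pairW) (pair_card HW pairW) eqxx.
Qed.

Lemma pair_cobd sg tu : inr (sg, tu) \in W -> tu \in cobd K sg.
Proof.
by move=> pairW; have [sgK tuK] := pair_mem HW pairW; rewrite mem_cobd // tuK pair_bd.
Qed.

Lemma crit_sub : crit W \subset K.
Proof.
by apply/subsetP => s; rewrite inE => /(step_added_sub HW)/subsetP; apply; rewrite set11.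
Qed.

Lemma lowreg_sub : lowreg W \subset K.
Proof. by apply/subsetP => s /upper_partnerP/(pair_mem HW)[]. Qed.

Lemma upreg_sub : upreg W \subset K.
Proof. by apply/subsetP => t /lower_partnerP/(pair_mem HW)[]. Qed.

Lemma morse_cover s : s \in K -> [\/ s \in crit W, s \in upreg W | s \in lowreg W].
Proof.
move=> sK; have := mem_step_stage HW sK; have := mem_nth (inl set0) (stage_lt HW sK).
case: nth => [nu | [sg tu]] xW sx; rewrite !inE in sx.
  by apply: Or31; rewrite (eqP sx) inE.
case/orP: sx => /eqP ->; [apply: Or33 | apply: Or32]; rewrite inE; apply/existsP.
  by exists tu.
by exists sg.
Qed.

Lemma lowreg_partner_bd s : s \in lowreg W ->
  [/\ upper_partner s \in upreg W, s \in bd K (upper_partner s) &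
      forall x, x \in bd K (upper_partner s) -> x != s -> stage W x < stage W s].
Proof.
move=> sL; have pairW := upper_partnerP sL; split; last 1 first.
- by move=> x; rewrite inE => /and3P[xK xt _]; apply: (pair_face_stage HW pairW).
- by rewrite inE; apply/existsP; exists s.
exact: pair_bd.
Qed.

Lemma upreg_partner_bd t : t \in upreg W ->
  [/\ lower_partner t \in lowreg W, lower_partner t \in bd K t &
      forall t', t' \in upreg W -> t' != t -> lower_partner t \in bd K t' ->
        stage W t < stage W t'].
Proof.
move=> tU; have pairW := lower_partnerP tU; split; last 1 first.
- move=> t' /(subsetP upreg_sub) t'K t't; rewrite inE => /and3P[_ st' _].
  exact: (pair_coface_stage HW pairW).
- by rewrite inE; apply/existsP; exists t.
exact: pair_bd.
Qed.

(* The dual argument runs through the Morse sequence backwards. *)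
Lemma upreg_partner_cobd t : t \in upreg W ->
  [/\ lower_partner t \in lowreg W, t \in cobd K (lower_partner t) &
      forall x, x \in cobd K (lower_partner t) -> x != t ->
        size W - stage W x < size W - stage W t].
Proof.
move=> tU; have pairW := lower_partnerP tU; split; last 1 first.
- move=> x; rewrite inE => /and3P[xK sx _] xt.
  have := pair_coface_stage HW pairW xK sx xt; have := stage_lt HW xK; lia.
- by rewrite inE; apply/existsP; exists t.
exact: pair_cobd.
Qed.

Lemma lowreg_partner_cobd s : s \in lowreg W ->
  [/\ upper_partner s \in upreg W, upper_partner s \in cobd K s &
      forall s', s' \in lowreg W -> s' != s -> upper_partner s \in cobd K s' ->
        size W - stage W s < size W - stage W s'].
Proof.
move=> sL; have pairW := upper_partnerP sL; split; last 1 first.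
- move=> s' /(subsetP lowreg_sub) s'K s's; rewrite inE => /and3P[_ s't _].
  have := pair_face_stage HW pairW s'K s't s's.
  have := stage_lt HW (proj1 (pair_mem HW pairW)); lia.
- by rewrite inE; apply/existsP; exists s.
exact: pair_cobd.
Qed.

Variables rf crf : T -> {set T}.
Hypotheses (Hrf : is_ref K W rf) (Hcrf : is_coref K W crf).

Lemma ref_sub_crit (f : T -> {set T}) :
    (forall s, s \in K -> f s \subset [set k in crit W | #|k| == #|s|]) ->
  forall s, s \in K -> f s \subset crit W.
Proof. by move=> f_sub s /f_sub/subset_trans; apply; rewrite setIdE subsetIl. Qed.

Lemma cycle_homologous p z :
  is_cycle K p z -> is_boundary K p (csum (ext K crf (lin rf z)) z).
Proof.
case: Hrf Hcrf => [rf_sub rf_crit rf_up] [_ crf_crit crf_low] [zKp z_cycle].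
have crf_cobd s t : s \in lowreg W -> (t \in cobd K s) = (t \in K) && (s \in bd K t).
  by move/(subsetP lowreg_sub); apply: mem_cobd.
have [w wL <-] := ext_ref_homologous morse_cover rf_crit rf_up (@bd_sub _ K)
  (@card_bd _ K) lowreg_partner_bd upreg_partner_bd crit_sub crf_crit crf_low
  crf_cobd upreg_sub (ref_sub_crit rf_sub) (bd_bd (morse_complex HW)) zKp z_cycle.
exists w => //; apply/(subset_trans wL)/subsetP => t /setIdP[tU /eqP tn].
by rewrite inE (subsetP upreg_sub t tU); apply/eqP; lia.
Qed.

Lemma cocycle_cohomologous p z :
  is_cocycle K p z -> is_coboundary K p (csum (coext K rf (lin crf z)) z).
Proof.
case: Hrf Hcrf => [_ rf_crit rf_up] [crf_sub crf_crit crf_low] [zKp z_cocycle].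
have cover s : s \in K -> [\/ s \in crit W, s \in lowreg W | s \in upreg W].
  by case/morse_cover; [apply: Or31 | apply: Or33 | apply: Or32].
have rf_bd t s : t \in upreg W -> (s \in bd K t) = (s \in K) && (t \in cobd K s).
  by move/(subsetP upreg_sub); apply: mem_bd.
have [w wL <-] := ext_ref_homologous cover crf_crit crf_low (@cobd_sub _ K)
  (@card_cobd _ K) upreg_partner_cobd lowreg_partner_cobd crit_sub rf_crit rf_up
  rf_bd lowreg_sub (ref_sub_crit crf_sub) (cobd_cobd (morse_complex HW)) zKp z_cocycle.
exists w => //; apply/(subset_trans wL)/subsetP => t /setIdP[tL /eqP tn].
by rewrite inE (subsetP lowreg_sub t tL); apply/eqP; lia.
Qed.

End MorseMatching.

Unset Implicit Arguments.

Theorem proposition18 (V : finType) (K : {set {set V}}) (W : seq (step V))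
  (rf crf : {set V} -> {set {set V}}) :
  morse_seq K W -> is_ref K W rf -> is_coref K W crf ->
  forall p : nat,
    (forall z, is_cycle K p z ->
       is_boundary K p (csum (ext K crf (lin rf z)) z)) /\
    (forall z, is_cocycle K p z ->
       is_coboundary K p (csum (coext K rf (lin crf z)) z)).
Proof.
move=> HW Hrf Hcrf p; split=> z.
  exact: (cycle_homologous HW Hrf Hcrf).
exact: (cocycle_cohomologous HW Hrf Hcrf).
Qed.
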